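(* Let $(X,\kappa)$ be a $\kappa$-connected digital image with more than one point. Then every constant map $f: X \to X$ is digitally homotopic to a map $g: X \to X$ that has no fixed points.
   Context: A digital image is a pair $(X,\kappa)$ with $X \subset \mathbb{Z}^n$ and $\kappa$ an adjacency relation on $X$; it is $\kappa$-connected if any two points are joined by a finite sequence of points of $X$ with consecutive points $\kappa$-adjacent. A function $h:(X,\kappa)\to(X,\kappa)$ is continuous if $x \leftrightarrow_\kappa x'$ implies $h(x)=h(x')$ or $h(x)\leftrightarrow_\kappa h(x')$. Two continuous maps $f,g: X\to X$ are (digitally) homotopic if there are $m \in \mathbb{N}$ and $F: X \times [0,m]_{\mathbb{Z}} \to X$ with $F(x,0)=f(x)$, $F(x,m)=g(x)$ for all $x$, each $x \mapsto F(x,t)$ continuous, and each $t\mapsto F(x,t)$ continuous from $[0,m]_{\mathbb{Z}}$ with $2$-adjacency (consecutive integers adjacent) to $(X,\kappa)$. *)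

From mathcomp Require Import all_boot.
From mathcomp Require Import ssralg ssrint.
Set Implicit Arguments. Unset Strict Implicit. Unset Printing Implicit Defensive.

Definition pt (n : nat) := (n.-tuple int)%type.

Definition adjacency (T : eqType) (k : rel T) : Prop :=
  irreflexive k /\ symmetric k.

Definition digitally_connected (T : eqType) (X : pred T) (k : rel T) : Prop :=
  forall x y, x \in X -> y \in X ->
    exists s : seq T, [/\ all (mem X) s, path k x s & last x s = y].

Definition maps_into (T : eqType) (X : pred T) (h : T -> T) : Prop :=
  forall x, x \in X -> h x \in X.

Definition digitally_continuous (T : eqType) (X : pred T) (k : rel T)
  (h : T -> T) : Prop :=
  forall x x', x \in X -> x' \in X -> k x x' -> h x = h x' \/ k (h x) (h x').

(* Digital homotopy between f and g (maps X -> X): values are only relevant on X. *)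
Definition digitally_homotopic (T : eqType) (X : pred T) (k : rel T)
  (f g : T -> T) : Prop :=
  exists (m : nat) (F : T -> nat -> T),
    [/\ forall x, x \in X -> F x 0 = f x,
        forall x, x \in X -> F x m = g x,
        forall t, t <= m -> maps_into X (fun x => F x t),
        forall t, t <= m -> digitally_continuous X k (fun x => F x t)
      & forall x t, x \in X -> t < m -> F x t = F x t.+1 \/ k (F x t) (F x t.+1)].

From mathcomp Require Import all_boot.
From mathcomp Require Import ssralg ssrint.

Set Implicit Arguments.
Unset Strict Implicit.

(* Connectedness gives c a neighbour d in X.  The map sending c to d and
   every other point to c is continuous and fixed-point free, and each of
   its values is c or adjacent to c, so it is a one-step homotopy away from
   the constant map c. *)

Section DigitalImage.

Variables (T : eqType) (X : pred T) (k : rel T).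

Lemma connected_neighbour c :
  digitally_connected X k -> (exists x y, [/\ x \in X, y \in X & x != y]) ->
  c \in X -> exists2 d, d \in X & k c d.
Proof.
move=> conn [x [y [xX yX xy]]] cX.
have [z zX zc] : exists2 z, z \in X & z != c.
  have [xc|xc] := eqVneq x c; last by exists x.
  by exists y; rewrite // -xc eq_sym.
have [[|a s] [/= sX csa last_s]] := conn c z cX zX.
  by rewrite -last_s eqxx in zc.
case/andP: sX => aX _; case/andP: csa => ca _.
by exists a.
Qed.

Lemma homotopic_const_adjacent c g :
  c \in X -> maps_into X g -> digitally_continuous X k g ->
  (forall x, x \in X -> c = g x \/ k c (g x)) ->
  digitally_homotopic X k (fun _ => c) g.
Proof.
move=> cX gX gcont near_c.
exists 1, (fun x t => if t == 0 then c else g x); split => //.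
- by move=> [|t] _ x xX //=; apply: gX.
- by move=> [|t] _ x x' xX x'X kxx' /=; [left | apply: gcont].
- by move=> x [|t] xX //= _; apply: near_c.
Qed.

Definition move_point (c d : T) (x : T) : T := if x == c then d else c.

Variables c d : T.

Lemma move_point_maps_into : c \in X -> d \in X -> maps_into X (move_point c d).
Proof. by move=> cX dX x _; rewrite /move_point; case: ifP. Qed.

Lemma move_point_continuous :
  symmetric k -> k c d -> digitally_continuous X k (move_point c d).
Proof.
move=> ksym kcd x x' _ _ _; rewrite /move_point.
by case: (x == c); case: (x' == c) => /=; [left | rewrite ksym; right | right | left].
Qed.

Lemma move_point_near :
  k c d -> forall x, c = move_point c d x \/ k c (move_point c d x).
Proof. by move=> kcd x; rewrite /move_point; case: ifP; [right | left]. Qed.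

Lemma move_point_fixpoint_free : d != c -> forall x, move_point c d x != x.
Proof.
move=> dc x; rewrite /move_point.
by have [->|xc] := eqVneq x c; last rewrite eq_sym.
Qed.

End DigitalImage.

Theorem mainTheorem11 (n : nat) (X : pred (pt n)) (kappa : rel (pt n)) :
  adjacency kappa ->
  digitally_connected X kappa ->
  (exists x y, [/\ x \in X, y \in X & x != y]) ->
  forall c : pt n, c \in X ->
  exists g : pt n -> pt n,
    [/\ maps_into X g, digitally_continuous X kappa g,
        digitally_homotopic X kappa (fun _ => c) g
      & forall x, x \in X -> g x != x].
Proof.
move=> [kirr ksym] conn two_points c cX.
have [d dX kcd] := connected_neighbour conn two_points cX.
have dc : d != c by apply: contraTneq kcd => ->; rewrite kirr.
have gX : maps_into X (move_point c d) := move_point_maps_into cX dX.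
have gcont : digitally_continuous X kappa (move_point c d) :=
  move_point_continuous ksym kcd.
exists (move_point c d); split => //.
- apply: homotopic_const_adjacent => // x _.
  exact: move_point_near.
- by move=> x _; apply: move_point_fixpoint_free.
Qed.
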